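(* Let $\mathcal{M}\subset\mathbb{R}^n$ be a locally symmetric $C^2$ submanifold and let $\sigma_*$ be a characteristic permutation of $\mathcal{M}$. Then every set in the partition $P(\sigma_* )$ consists of consecutive integers of $\mathbb{N}_n$.
   Context: $\Sigma^n$ is the group of permutations of $\mathbb{N}_n=\{1,\dots,n\}$, acting on $\mathbb{R}^n$ by $(\sigma x)_i=x_{\sigma^{-1}(i)}$. $P(\sigma)$ is the partition of $\mathbb{N}_n$ into the orbits of $\sigma$. For $x\in\mathbb{R}^n$, $P(x)$ is the partition in which $i,j$ lie in the same set iff $x_i=x_j$; $\Delta(\sigma)=\{x:P(x)=P(\sigma)\}$. $\mathbb{R}^n_{\ge}=\{x:x_1\ge\cdots\ge x_n\}$; $B(x,\delta)$ is the open Euclidean ball. A set $S\subset\mathbb{R}^n$ is locally symmetric if $S\cap\mathbb{R}^n_{\ge}\ne\emptyset$ and for every $x\in S$ there is $\delta>0$ with $\sigma(S\cap B(x,\delta))=S\cap B(x,\delta)$ for all $y\in S\cap B(x,\delta)$ and all $\sigma$ with $\sigma y=y$. A locally symmetric $C^2$ submanifold is a connected $C^2$ submanifold of $\mathbb{R}^n$ without boundary which is a locally symmetric set. A characteristic permutation of $\mathcal{M}$ is a $\sigma_*\in\Sigma^n$ for which there exist $\bar x\in\mathcal{M}$ and $\delta>0$ with $\mathcal{M}\cap B(\bar x,\delta)\subset\Delta(\sigma_* )$. *)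

(* Points of R^n are row vectors 'rV[R]_n,
   indices N_n = {1..n} are represented by 'I_n = {0..n-1}. *)
From HB Require Import structures.
From mathcomp Require Import all_boot all_order all_algebra all_fingroup.
From mathcomp Require Import all_classical all_reals all_analysis.
Set Implicit Arguments. Unset Strict Implicit. Unset Printing Implicit Defensive.
Import Order.TTheory GRing.Theory Num.Theory.
Import numFieldNormedType.Exports.
Local Open Scope ring_scope.

Definition Pvec (R : realType) (n : nat) (x : 'rV[R]_n) : {set {set 'I_n}} :=
  [set [set j | x ord0 j == x ord0 i] | i : 'I_n].

Local Open Scope classical_set_scope.

Section Defs.
Variables (R : realType) (n : nat).
Notation V := 'rV[R]_n.

Definition pact (s : 'S_n) (x : V) : V := \row_i x ord0 (s^-1%g i).

Definition Pperm (s : 'S_n) : {set {set 'I_n}} := porbits s.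


Definition Delta (s : 'S_n) : set V := [set x | Pvec x = Pperm s].

Definition Rge_cone : set V :=
  [set x | forall i j : 'I_n, (i <= j)%N -> x ord0 j <= x ord0 i].

Definition eball (x : V) (d : R) : set V :=
  [set y | Num.sqrt (\sum_i (y ord0 i - x ord0 i) ^+ 2) < d].

Definition locally_symmetric (S : set V) : Prop :=
  S `&` Rge_cone !=set0 /\
  forall x, S x -> exists2 d : R, 0 < d &
    forall y, (S `&` eball x d) y ->
    forall s : 'S_n, pact s y = y ->
      pact s @` (S `&` eball x d) = S `&` eball x d.

End Defs.

Section Smooth.
Variables (R : realType) (n k : nat).
Definition C1_on (U : set 'rV[R]_n) (f : 'rV[R]_n -> 'rV[R]_k) : Prop :=
  forall v : 'rV[R]_n, forall x, U x ->
    derivable f x v /\ {for x, continuous (fun y => 'D_v f y)}.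
Definition C2_on (U : set 'rV[R]_n) (f : 'rV[R]_n -> 'rV[R]_k) : Prop :=
  C1_on U f /\ forall v : 'rV[R]_n, C1_on U (fun y => 'D_v f y).
End Smooth.

(* A connected C^2 embedded submanifold of R^n (without boundary) of some
   dimension d: locally the regular zero set of a C^2 map into R^(n-d). *)
Definition C2_submanifold (R : realType) (n : nat) (M : set 'rV[R]_n) : Prop :=
  exists d : nat, (d <= n)%N /\
  forall x, M x -> exists U : set 'rV[R]_n, exists F : 'rV[R]_n -> 'rV[R]_(n - d),
    [/\ open U, U x, C2_on U F,
        (forall w : 'rV[R]_(n - d), exists v : 'rV[R]_n, 'D_v F x = w) &
        M `&` U = [set y | U y /\ F y = 0]].

Definition locally_symmetric_C2_submanifold (R : realType) (n : nat)
  (M : set 'rV[R]_n) : Prop :=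
  [/\ C2_submanifold M, connected M & locally_symmetric M].

Definition characteristic_permutation (R : realType) (n : nat)
  (M : set 'rV[R]_n) (s : 'S_n) : Prop :=
  exists xb, M xb /\ exists2 d : R, 0 < d & M `&` eball xb d `<=` @Delta R n s.

(* For indices a <> b, call a point of M (a,b)-flat if the coordinates a and b
   agree on M near it (the set [coords_locally_equal M a b]).  The flat points
   form a relatively open subset of M; they also form a relatively closed one.
   Indeed, at a limit q of flat points q_a = q_b, so local symmetry makes M
   invariant near q under the transposition (a b).  The direction e_a - e_b is
   transversal to M at q: otherwise, moving a flat point along it and
   projecting back onto M by a quasi-Newton iteration (possible since the local
   defining map F has a surjective differential) would produce points of M
   near it with distinct coordinates a and b.  A point y of M near q and its
   transposed copy differ by (y_a - y_b)(e_a - e_b) and are both zeros of F, so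
   transversality forces y_a = y_b.  By connectedness, if M has one flat
   point, then x_a = x_b on all of M.

   Let O be a block of P(sigma) with i, j in O and i <= k <= j.  Near the
   characteristic point M lies in Delta(sigma), so every point of M has
   x_i = x_j, while M has no (i,k)-flat point unless k is in O.  Take z in M
   with nonincreasing coordinates: z_i >= z_k >= z_j = z_i, so the
   transposition (k j) fixes z and preserves M near z.  Applied to a point y of
   M near z with y_i <> y_k, it gives a point of M with distinct coordinates
   i and j. *)

From HB Require Import structures.
From mathcomp Require Import all_boot all_order all_algebra all_fingroup.
From mathcomp Require Import all_classical all_reals all_analysis.
From mathcomp Require Import zify ring lra.
Import Order.TTheory GRing.Theory Num.Theory.
Import numFieldNormedType.Exports.
Set Implicit Arguments. Unset Strict Implicit. Unset Printing Implicit Defensive.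
Local Open Scope classical_set_scope.
Local Open Scope ring_scope.

Section RowNorm.
Variable R : realType.

Lemma row_coord_le_norm n (x : 'rV[R]_n) i : `|x ord0 i| <= `|x|.
Proof.
rewrite [leRHS]/Num.Def.normr /= mx_normrE.
by apply/bigmax_geP; right; exists (ord0, i).
Qed.

Lemma row_norm_le n (x : 'rV[R]_n) c :
  0 <= c -> (forall i, `|x ord0 i| <= c) -> `|x| <= c.
Proof.
move=> c0 xc; rewrite [leLHS]/Num.Def.normr /= mx_normrE (bigmax_le _ c0) //=.
by move=> [i j] _; rewrite (ord1 i).
Qed.

(* [`|_|] on row vectors is the sup norm; the Euclidean norm is at most
   sqrt n <= n + 1 times larger. *)
Lemma eball_of_norm n (x y : 'rV[R]_n) d : `|y - x| * n.+1%:R < d -> eball x d y.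
Proof.
move=> yxd; rewrite /eball /=; apply: le_lt_trans yxd.
set c := `|y - x|; have c0 : 0 <= c := normr_ge0 _.
rewrite -[leRHS]ger0_norm ?mulr_ge0 // -sqrtr_sqr ler_sqrt ?sqr_ge0 //.
apply: (@le_trans _ _ (\sum_(i < n) c ^+ 2)).
  apply: ler_sum => i _; rewrite -[leLHS]ger0_norm ?sqr_ge0 // normrX lerXn2r ?nnegrE //.
  by have := row_coord_le_norm (y - x) i; rewrite !mxE.
rewrite sumr_const card_ord exprMn -[leLHS]mulr_natr; apply: ler_wpM2l; first exact: sqr_ge0.
by rewrite -natrX ler_nat; nia.
Qed.

Lemma eball_center n (x : 'rV[R]_n) d : 0 < d -> eball x d x.
Proof.
move=> d0; rewrite /eball /= big1 ?sqrtr0 // => i _.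
by rewrite subrr expr0n.
Qed.

Lemma norm_mulmx_le k l (u : 'rV[R]_k) (A : 'M[R]_(k, l)) :
  `|u *m A| <= (\sum_i \sum_j `|A i j|) * `|u|.
Proof.
apply: row_norm_le => [|j]; first by rewrite mulr_ge0 ?sumr_ge0 // => i _; rewrite sumr_ge0.
rewrite mxE; apply: le_trans (ler_norm_sum _ _ _) _.
rewrite mulrC mulr_sumr; apply: ler_sum => i _; rewrite normrM.
apply: ler_pM => //; first exact: row_coord_le_norm.
by rewrite (bigD1 j) //= lerDl sumr_ge0.
Qed.

Lemma pact_tperm_fixed n (a b : 'I_n) (x : 'rV[R]_n) :
  x ord0 a = x ord0 b -> pact (tperm a b) x = x.
Proof.
move=> xab; apply/rowP => i; rewrite mxE tpermV.
by case: tpermP => [->|->|] //; rewrite xab.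
Qed.

Lemma pact_tpermR n (a b : 'I_n) (x : 'rV[R]_n) :
  pact (tperm a b) x ord0 b = x ord0 a.
Proof. by rewrite mxE tpermV tpermR. Qed.

Lemma pact_tpermD n (a b i : 'I_n) (x : 'rV[R]_n) :
  i != a -> i != b -> pact (tperm a b) x ord0 i = x ord0 i.
Proof. by move=> ia ib; rewrite mxE tpermV tpermD // eq_sym. Qed.

Lemma pactB n (s : 'S_n) (x y : 'rV[R]_n) : pact s x - pact s y = pact s (x - y).
Proof. by apply/rowP => i; rewrite !mxE. Qed.

Lemma norm_pact n (s : 'S_n) (x : 'rV[R]_n) : `|pact s x| = `|x|.
Proof.
have le_pact (t : 'S_n) (y : 'rV[R]_n) : `|pact t y| <= `|y|.
  by apply: row_norm_le => // i; rewrite mxE row_coord_le_norm.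
apply/eqP; rewrite eq_le le_pact /=.
have pactK : pact s^-1 (pact s x) = x by apply/rowP => i; rewrite !mxE invgK permK.
by rewrite -{1}pactK le_pact.
Qed.

End RowNorm.

Section RealFacts.
Variable R : realType.

Lemma MVT_increment_le (g dg : R -> R) (a b K e : R) : a <= b ->
  (forall t, a <= t <= b -> is_derive t 1 g (dg t) /\ `|dg t - K| <= e) ->
  `|g b - g a - (b - a) * K| <= e * (b - a).
Proof.
move=> ab gd.
have gd' t : t \in `[a, b]%R -> is_derive t 1 g (dg t) /\ `|dg t - K| <= e.
  by rewrite in_itv /= => /gd.
have gdo t : t \in `]a, b[%R -> is_derive t 1 g (dg t).
  by rewrite in_itv /= => /andP[/ltW ta /ltW tb]; case: (gd t); rewrite ?ta.
have gc : {within `[a, b], continuous g}.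
  by apply: derivable_within_continuous => t /gd' [[]].
have [t tab ->] := MVT_segment ab gdo gc.
rewrite [_ * K]mulrC -mulrBl normrM [`|b - a|]ger0_norm ?subr_ge0 //.
by apply: ler_wpM2r; [rewrite subr_ge0 | exact: (gd' t tab).2].
Qed.

Lemma MVT_increment_le0 (g dg : R -> R) (c K e : R) :
  (forall t, Num.min 0 c <= t <= Num.max 0 c ->
     is_derive t 1 g (dg t) /\ `|dg t - K| <= e) ->
  `|g c - g 0 - c * K| <= e * `|c|.
Proof.
move=> gd; have [c0|c0] := leP 0 c.
  have := @MVT_increment_le g dg _ _ K e c0.
  rewrite !subr0 [`|c|]ger0_norm //; apply => t /andP[t0 tc].
  by apply: gd; rewrite ge_min le_max t0 tc !orbT.
have -> : g c - g 0 - c * K = - (g 0 - g c - (0 - c) * K) by ring.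
have := @MVT_increment_le g dg _ _ K e (ltW c0).
rewrite normrN [`|c|]ltr0_norm // sub0r; apply => t /andP[ct t0].
by apply: gd; rewrite ge_min le_max t0 ct !orbT.
Qed.

Lemma norm_between_le (u v w : R) :
  Num.min v w <= u <= Num.max v w -> `|u| <= Num.max `|v| `|w|.
Proof.
rewrite ge_min !le_max => /andP[lo hi].
have Nv : - v <= `|v| by rewrite -normrN ler_norm.
have Nw : - w <= `|w| by rewrite -normrN ler_norm.
have := ler_norm v; have := ler_norm w.
case: (ger0P u) => u0 vv ww; case/orP: lo; case/orP: hi => ? ?;
  by apply/orP; first [left; lra | right; lra].
Qed.

Lemma geometric_lt (c e : R) : 0 < e -> exists k : nat, c * 2^-1 ^+ k < e.
Proof.
move=> e0; have [c0|c0] := leP c 0; first by exists 0%N; rewrite expr0 mulr1; lra.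
exists (Num.Def.truncn (c / e)).
rewrite exprVn mulrC ltr_pdivrMl ?exprn_gt0 // -ltr_pdivrMr //.
by apply: lt_le_trans (truncnS_gt _) _; rewrite -natrX ler_nat ltn_expl.
Qed.

End RealFacts.

Section QuasiNewton.
Variables (R : realType) (n m : nat) (F : 'rV[R]_n -> 'rV[R]_m).
Variables (J : 'M[R]_(n, m)) (B : 'M[R]_(m, n)) (q : 'rV[R]_n) (K r : R).
Hypotheses (K0 : 0 < K) (BJ : B *m J = 1%:M) (normB : forall w : 'rV[R]_m, `|w *m B| <= K * `|w|).
Hypothesis F_lin : forall a b, `|a - q| < r -> `|b - q| < r ->
  `|F a - F b - (a - b) *m J| <= (4 * K)^-1 * `|a - b|.
Variable p : 'rV[R]_n.
Hypothesis p_near : `|p - q| + 2 * K * `|F p| < r.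

(* Since [F_lin] holds with the factor 1/(4K), each quasi-Newton step divides
   [|F|] by 4 while moving by at most K |F|, so the iterates converge
   geometrically. *)
Let x k := iter k (fun y => y - F y *m B) p.
Let h k : R := 2^-1 ^+ k.

Let hS k : h k.+1 = h k / 2. Proof. by rewrite /h exprSr. Qed.
Let h_gt0 k : 0 < h k. Proof. by rewrite exprn_gt0 ?invr_gt0. Qed.
Let Fp_ge0 : 0 <= `|F p|. Proof. exact: normr_ge0. Qed.

Let xS k : x k.+1 - x k = - (F (x k) *m B).
Proof. by rewrite /= addrC addKr. Qed.

Let shrink s t : 0 <= t -> 2 * K * (s - t) * `|F p| <= 2 * K * s * `|F p|.
Proof.
move=> t0; apply: ler_wpM2r => //; apply: ler_wpM2l; last by rewrite gerBl.
by rewrite mulr_ge0 // ltW.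
Qed.

Let shrink1 t : 0 <= t -> 2 * K * (1 - t) * `|F p| <= 2 * K * `|F p|.
Proof. by move/(shrink 1); rewrite mulr1. Qed.

Lemma newton_ball y : `|y - p| <= 2 * K * `|F p| -> `|y - q| < r.
Proof.
move=> yp; apply: le_lt_trans (ler_distD p y q) (le_lt_trans _ p_near).
by rewrite addrC lerD2l.
Qed.

Lemma newton_iter_bound k :
  `|F (x k)| <= h k * `|F p| /\ `|x k - p| <= 2 * K * (1 - h k) * `|F p|.
Proof.
elim: k => [|k [Fk xk]]; first by rewrite /h expr0 mul1r subrr normr0 subrr !mulr0 mul0r.
have hk := h_gt0 k.
have step : `|x k.+1 - x k| <= K * (h k * `|F p|).
  by rewrite xS normrN (le_trans (normB _)) // ler_wpM2l // ltW.
have xk1 : `|x k.+1 - p| <= 2 * K * (1 - h k.+1) * `|F p|.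
  by apply: le_trans (ler_distD (x k) _ _) _; rewrite hS; nra.
split=> //.
have ball_k : `|x k - q| < r by apply/newton_ball/(le_trans xk)/shrink1/ltW.
have ball_k1 : `|x k.+1 - q| < r by apply/newton_ball/(le_trans xk1)/shrink1/ltW.
have := F_lin ball_k1 ball_k.
have -> : (x k.+1 - x k) *m J = - F (x k) by rewrite xS mulNmx -mulmxA BJ mulmx1.
rewrite opprK subrK => /le_trans; apply.
apply: le_trans (ler_wpM2l _ step) _; first by rewrite invr_ge0 mulr_ge0 // ltW.
have K_neq0 : K != 0 by rewrite gt_eqF.
rewrite (_ : (4 * K)^-1 * (K * (h k * `|F p|)) = h k * `|F p| / 4); last by field.
by rewrite hS mulrAC; apply: ler_wpM2r => //; lra.
Qed.

Lemma newton_iter_cauchy k l : (k <= l)%N -> `|x l - x k| <= 2 * K * h k * `|F p|.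
Proof.
move=> /subnKC <-; set j := (l - k)%N.
suff : `|x (k + j) - x k| <= 2 * K * (h k - h (k + j)) * `|F p|.
  by move/le_trans; apply; apply/shrink/ltW.
elim: j => [|j IH]; first by rewrite addn0 !subrr normr0 mulr0 mul0r.
rewrite addnS; apply: le_trans (ler_distD (x (k + j)) _ _) _.
have step : `|x (k + j).+1 - x (k + j)| <= K * h (k + j) * `|F p|.
  rewrite xS normrN (le_trans (normB _)) // -mulrA ler_wpM2l ?(newton_iter_bound _).1 //.
  exact: ltW.
rewrite hS; nra.
Qed.

Lemma newton_limit : exists z, forall k, `|z - x k| <= 2 * K * h k * `|F p|.
Proof.
have x_cvg : cvgn x.
  apply: cauchy_cvg; apply: cauchy_exP => e e0.
  have [k ke] := geometric_lt (2 * K * `|F p|) e0.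
  exists (x k), k => // l /= kl.
  rewrite -ball_normE /ball_ /= distrC (le_lt_trans (newton_iter_cauchy kl)) //.
  by rewrite -mulrA [_ * `|F p|]mulrC mulrA.
exists (limn x) => k; apply/ler_addgt0Pr => e e0.
have [N _ xN] := (cvgrPdist_le _ _).1 x_cvg e e0.
have := xN _ (leq_maxl N k); have := newton_iter_cauchy (leq_maxr N k).
have := ler_distD (x (maxn N k)) (limn x) (x k); lra.
Qed.

Theorem quasi_newton_zero : exists z,
  [/\ F z = 0, `|z - q| < r & `|z - p| <= 2 * K * `|F p|].
Proof.
have [z zx] := newton_limit.
have zp : `|z - p| <= 2 * K * `|F p| by have := zx 0%N; rewrite /h expr0 mulr1.
have zq := newton_ball zp.
exists z; split=> //.
set C := 1 + ((4 * K)^-1 + \sum_i \sum_j `|J i j|) * (2 * K).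
have Fz k : `|F z| <= C * `|F p| * h k.
  have [Fk xk] := newton_iter_bound k.
  have xkq : `|x k - q| < r by apply/newton_ball/(le_trans xk)/shrink1/ltW.
  have lin := F_lin zq xkq; have J_le := norm_mulmx_le (z - x k) J.
  have zk := zx k; have hk := h_gt0 k.
  have -> : F z = F (x k) + (F z - F (x k) - (z - x k) *m J) + (z - x k) *m J.
    by rewrite -addrA subrK addrC subrK.
  apply: le_trans (ler_normD _ _) _; apply: le_trans (lerD (ler_normD _ _) (lexx _)) _.
  have S0 : 0 <= \sum_i \sum_j `|J i j| by rewrite sumr_ge0 // => i _; rewrite sumr_ge0.
  have c4 : 0 <= (4 * K)^-1 by rewrite invr_ge0 mulr_ge0 // ltW.
  have e1 := ler_wpM2l c4 zk.
  have e2 := ler_wpM2l S0 zk.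
  rewrite /C; lra.
apply/eqP; rewrite -normr_eq0 eq_le normr_ge0 andbT.
apply/ler_addgt0Pr => e e0; rewrite add0r.
have [k ke] := geometric_lt (C * `|F p|) e0.
exact: le_trans (Fz k) (ltW ke).
Qed.

End QuasiNewton.

Section Staircase.
Variables (R : realType) (n : nat) (a b : 'rV[R]_n).

Definition stair (k : nat) : 'rV[R]_n :=
  \row_j (if (j < k)%N then a ord0 j else b ord0 j).

Lemma stair0 : stair 0 = b.
Proof. by apply/rowP => j; rewrite mxE. Qed.

Lemma stair_last : stair n = a.
Proof. by apply/rowP => j; rewrite mxE ltn_ord. Qed.

Lemma stairS (k : 'I_n) :
  stair k.+1 = (a ord0 k - b ord0 k) *: 'e_k + stair k.
Proof.
apply/rowP => j; rewrite !mxE /= ltnS.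
case: ltngtP => [jk|kj|/val_inj ->]; last by rewrite eqxx mulr1 subrK.
  by rewrite -val_eqE (ltn_eqF jk) mulr0 add0r.
by rewrite -val_eqE (gtn_eqF kj) mulr0 add0r.
Qed.

Lemma stair_near (q : 'rV[R]_n) (k : 'I_n) t :
  Num.min 0 (a ord0 k - b ord0 k) <= t <= Num.max 0 (a ord0 k - b ord0 k) ->
  `|t *: 'e_k + stair k - q| <= Num.max `|a - q| `|b - q|.
Proof.
move=> tk; apply: row_norm_le => [|j]; first by rewrite le_max normr_ge0.
rewrite !mxE /=; have [->|jk] := eqVneq j k.
  rewrite ltnn /= mulr1n mulr1.
  apply: le_trans (@norm_between_le _ _ (b ord0 k - q ord0 k) (a ord0 k - q ord0 k) _) _.
    move: tk; rewrite !ge_min !le_max => /andP[lo hi].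
    by case/orP: lo => ?; case/orP: hi => ?; apply/andP; split; apply/orP;
      first [left; lra | right; lra].
  have := row_coord_le_norm (a - q) k; have := row_coord_le_norm (b - q) k.
  by rewrite !mxE ge_max !le_max => -> ->; rewrite !orbT.
have := row_coord_le_norm (a - q) j; have := row_coord_le_norm (b - q) j.
rewrite !mxE mulr0 add0r => bj aj.
by case: ifP => _; rewrite le_max ?aj ?bj ?orbT.
Qed.

End Staircase.

Definition partials_mx (R : realType) n m (F : 'rV[R]_n -> 'rV[R]_m) (q : 'rV[R]_n) :
    'M[R]_(n, m) :=
  \matrix_(j, i) ('D_('e_j) F q) ord0 i.

Lemma is_derive_along_line (R : realType) n m (F : 'rV[R]_n -> 'rV[R]_m)
    (p v : 'rV[R]_n) (t : R) (i : 'I_m) :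
  derivable F (t *: v + p) v ->
  is_derive t 1 (fun s => F (s *: v + p) ord0 i) ('D_v F (t *: v + p) ord0 i).
Proof.
move=> dF; set G := fun s : R => F (s *: v + p).
have quot : (fun h : R => h^-1 *: ((G \o shift t) (h *: 1) - G t)) =
    (fun h : R => h^-1 *: ((F \o shift (t *: v + p)) (h *: v) - F (t *: v + p))).
  by apply/funext => h; rewrite /G /= /shift [h%:A]mulr1 scalerDl addrA.
have dG : derivable G t 1 by rewrite /derivable quot.
have DG : 'D_1 G t = 'D_v F (t *: v + p) by rewrite /derive quot.
apply: DeriveDef; first exact: (derivable_mxP G t 1).1 dG ord0 i.
by rewrite -DG (derive_mx dG) mxE.
Qed.

Section Chart.
Variables (R : realType) (n m : nat) (U : set 'rV[R]_n) (F : 'rV[R]_n -> 'rV[R]_m).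
Variable q : 'rV[R]_n.
Hypotheses (oU : open U) (Uq : U q) (C1F : C1_on U F).

Local Notation J := (partials_mx F q).

Lemma partial_increment_le (k : 'I_n) (i : 'I_m) (p : 'rV[R]_n) (c e : R) :
  (forall t, Num.min 0 c <= t <= Num.max 0 c ->
     U (t *: 'e_k + p) /\
     `|'D_('e_k) F (t *: 'e_k + p) - 'D_('e_k) F q| <= e) ->
  `|F (c *: 'e_k + p) ord0 i - F p ord0 i - c * J k i| <= e * `|c|.
Proof.
move=> near_q; have := @MVT_increment_le0 _ (fun s => F (s *: 'e_k + p) ord0 i)
  (fun s => 'D_('e_k) F (s *: 'e_k + p) ord0 i) c (J k i) e.
rewrite /= scale0r add0r; apply => t /near_q [Ut Dt]; split.
  exact/is_derive_along_line/(C1F _ Ut).1.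
have := row_coord_le_norm ('D_('e_k) F (t *: 'e_k + p)
  - 'D_('e_k) F q) i.
by rewrite !mxE => /le_trans; apply.
Qed.

(* Along the staircase from b to a a single coordinate changes at a time, so the
   mean value theorem applies to one partial derivative at a time. *)
Lemma strict_linearization e : 0 < e -> exists2 r, 0 < r &
  (forall a, `|a - q| < r -> U a) /\
  (forall a b, `|a - q| < r -> `|b - q| < r ->
     `|F a - F b - (a - b) *m J| <= e * `|a - b|).
Proof.
move=> e0; set e' := e / n.+1%:R; have e'0 : 0 < e' by rewrite divr_gt0.
have near_q : \forall a \near q, U a /\
    forall j, `|'D_('e_j) F q - 'D_('e_j) F a| < e'.
  near=> a; split; first by near: a; apply: open_nbhs_nbhs; split.
  near: a; apply: filter_forall => j.
  by have [_ /cvgrPdist_lt] := C1F ('e_j) Uq; apply.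
have [r r0 ball_r] := (nbhs_ballP _ _).1 near_q.
have in_r z : `|z - q| < r -> U z /\
    forall j, `|'D_('e_j) F q - 'D_('e_j) F z| < e'.
  by move=> zq; apply: ball_r; rewrite -ball_normE /ball_ /= distrC.
exists r => //; split=> [a /in_r[]//|a b aq bq].
apply: row_norm_le => [|i]; first by rewrite mulr_ge0 // ltW.
have rho_r : Num.max `|a - q| `|b - q| < r by rewrite gt_max aq bq.
have step (k : 'I_n) : `|F (stair a b k.+1) ord0 i - F (stair a b k) ord0 i
    - (a ord0 k - b ord0 k) * J k i| <= e' * `|a ord0 k - b ord0 k|.
  rewrite stairS; apply: partial_increment_le => t tk.
  have [Ut Dt] := in_r _ (le_lt_trans (stair_near q tk) rho_r).
  by split=> //; rewrite distrC ltW.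
have -> : (F a - F b - (a - b) *m J) ord0 i = \sum_(k < n)
    (F (stair a b k.+1) ord0 i - F (stair a b k) ord0 i - (a ord0 k - b ord0 k) * J k i).
  rewrite sumrB -(big_mkord xpredT (fun k => F (stair a b k.+1) ord0 i - F (stair a b k) ord0 i)).
  rewrite telescope_sumr // stair_last stair0 !mxE; congr (_ - _).
  by apply: eq_bigr => k _; rewrite !mxE.
apply: le_trans (ler_norm_sum _ _ _) _; apply: le_trans (ler_sum _ (fun k _ => step k)) _.
apply: (@le_trans _ _ (\sum_(k < n) e' * `|a - b|)).
  apply: ler_sum => k _; apply: ler_wpM2l; first exact: ltW.
  by have := row_coord_le_norm (a - b) k; rewrite !mxE.
rewrite sumr_const card_ord -mulrnAl; apply: ler_wpM2r => //.
rewrite /e' -mulr_natr mulrAC ler_pdivrMr ?ltr0Sn //.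
by rewrite ler_wpM2l ?ler_nat // ltW.
Unshelve. all: by end_near.
Qed.

Lemma derive_partials v : 'D_v F q = v *m J.
Proof.
apply: cvg_lim => //; apply/cvgrPdist_le => eps eps0.
set e := eps / (`|v| + 1); have v1 : 0 < `|v| + 1 by rewrite ltr_wpDl.
have [r r0 [_ lin]] := strict_linearization (divr_gt0 eps0 v1).
near=> h.
have hr : `|h| < r / (`|v| + 1) by near: h; apply: dnbhs0_lt; rewrite divr_gt0.
have h0 : h != 0 by near: h; exact: nbhs_dnbhs_neq.
have hq : `|(h *: v + q) - q| < r.
  rewrite addrK normrZ (le_lt_trans _ (_ : `|h| * (`|v| + 1) < r)) //.
    by rewrite ler_wpM2l // lerDl.
  by rewrite -ltr_pdivlMr.
have qq : `|q - q| < r by rewrite subrr normr0.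
have := lin _ _ hq qq; rewrite addrK /shift /= -scalemxAl => E.
have -> : v *m J - h^-1 *: (F (h *: v + q) - F q) =
    - (h^-1 *: (F (h *: v + q) - F q - h *: (v *m J))).
  by rewrite [in RHS](scalerBr h^-1 _ (h *: _)) scalerA mulVf // scale1r opprB.
rewrite normrN normrZ normfV ler_pdivrMl ?normr_gt0 //.
apply: (le_trans E); rewrite normrZ mulrCA ler_wpM2l //.
rewrite /e mulrAC ler_pdivrMr // ler_wpM2l ?lerDl // ltW.
Unshelve. all: by end_near.
Qed.

Hypothesis DF_onto : forall w : 'rV[R]_m, exists v, 'D_v F q = w.

Lemma partials_right_inverse : exists B : 'M[R]_(m, n), B *m J = 1%:M.
Proof.
have /boolp.choice[f fJ] : forall i : 'I_m, exists v : 'rV[R]_n, v *m J = 'e_i.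
  by move=> i; have [v vi] := DF_onto ('e_i); exists v; rewrite -derive_partials.
exists (\matrix_(i, j) f i ord0 j); apply/matrixP => i i'.
have /rowP/(_ i') := fJ i; rewrite !mxE eq_sym => <-.
by apply: eq_bigr => j _; rewrite mxE.
Qed.

Lemma chart_zero_near : exists K : R, 0 < K /\ exists2 r : R, 0 < r &
  [/\ forall a, `|a - q| < r -> U a,
      forall a b, `|a - q| < r -> `|b - q| < r ->
         `|F a - F b - (a - b) *m J| <= (4 * K)^-1 * `|a - b| &
      forall p, `|p - q| + 2 * K * `|F p| < r -> exists x,
         [/\ F x = 0, `|x - q| < r & `|x - p| <= 2 * K * `|F p|]].
Proof.
have [B BJ] := partials_right_inverse.
set K := 1 + \sum_i \sum_j `|B i j|.
have K0 : 0 < K by rewrite ltr_wpDr // sumr_ge0 // => i _; rewrite sumr_ge0.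
have normB (w : 'rV[R]_m) : `|w *m B| <= K * `|w|.
  by apply: le_trans (norm_mulmx_le w B) _; rewrite ler_wpM2r // lerDr.
have c0 : 0 < (4 * K)^-1 by rewrite invr_gt0 mulr_gt0.
have [r r0 [Ur lin]] := strict_linearization c0.
exists K; split=> //; exists r => //; split=> // p.
exact: quasi_newton_zero K0 BJ normB lin p.
Qed.

End Chart.

Section Transposition.
Variables (R : realType) (n : nat) (a b : 'I_n).

Lemma norm_delta_mxB_le1 : `|'e_a - 'e_b : 'rV[R]_n| <= 1.
Proof.
apply: row_norm_le => // i; rewrite !mxE /=.
by case: (i == a); case: (i == b); rewrite ?subrr ?normr0 ?subr0 ?sub0r ?normrN ?normr1.
Qed.

Lemma subr_pact_tperm (x : 'rV[R]_n) : a != b ->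
  x - pact (tperm a b) x = (x ord0 a - x ord0 b) *: ('e_a - 'e_b).
Proof.
move=> ab; apply/rowP => i; rewrite !mxE tpermV.
case: tpermP => [->|->|/eqP ia /eqP ib]; rewrite ?eqxx.
- by rewrite (negbTE ab) subr0 mulr1.
- by rewrite eq_sym (negbTE ab) sub0r mulrN1 opprB.
- by rewrite (negbTE ia) (negbTE ib) !subrr mulr0.
Qed.

End Transposition.

Definition coords_locally_equal (R : realType) n (M : set 'rV[R]_n) (a b : 'I_n) :
    set 'rV[R]_n :=
  [set x | M x /\ exists2 d : R, 0 < d &
     forall y, M y -> `|y - x| < d -> y ord0 a = y ord0 b].

Section SymmetricChart.
Variables (R : realType) (n m : nat) (M U : set 'rV[R]_n).
Variables (F : 'rV[R]_n -> 'rV[R]_m) (q : 'rV[R]_n) (a b : 'I_n).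
Hypotheses (oU : open U) (Uq : U q) (C1F : C1_on U F).
Hypothesis DF_onto : forall w : 'rV[R]_m, exists v, 'D_v F q = w.
Hypothesis M_chart : M `&` U = [set y | U y /\ F y = 0].
Hypothesis ab : a != b.

Local Notation J := (partials_mx F q).
Local Notation v := ('e_a - 'e_b : 'rV[R]_n).

Let chart_zero y : M y -> U y -> F y = 0.
Proof. by move=> My Uy; have [] : [set y | U y /\ F y = 0] y by rewrite -M_chart. Qed.

Let chart_mem y : U y -> F y = 0 -> M y.
Proof. by move=> Uy Fy; have [] : (M `&` U) y by rewrite M_chart. Qed.

Lemma swap_direction_transversal :
  (forall rho, 0 < rho -> exists2 w, coords_locally_equal M a b w & `|w - q| < rho) ->
  v *m J != 0.
Proof.
move=> approx; apply/negP => /eqP vJ0.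
have [K [K0 [r r0 [Ur lin newton]]]] := chart_zero_near oU Uq C1F DF_onto.
have r4 : 0 < r / 4 by rewrite divr_gt0.
have [w [Mw [dw dw0 w_eq]] wq] := approx _ r4.
have wab : w ord0 a = w ord0 b by apply: w_eq; rewrite ?subrr ?normr0.
set s := Num.min (r / 4) (dw / 2).
have s0 : 0 < s by rewrite lt_min r4 divr_gt0.
have [s1 s2] : s <= r / 4 /\ s <= dw / 2 by split; rewrite ge_min lexx ?orbT.
set p := w + s *: v.
have pw : p - w = s *: v by rewrite addrAC subrr add0r.
have pw_le : `|p - w| <= s.
  rewrite pw normrZ gtr0_norm // -[leRHS]mulr1.
  by rewrite ler_wpM2l ?norm_delta_mxB_le1 // ltW.
have wr : `|w - q| < r by apply: lt_le_trans wq _; lra.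
have pr : `|p - q| <= r / 4 + s by apply: le_trans (ler_distD w _ _) _; lra.
have pr' : `|p - q| < r by lra.
have Fp : 2 * K * `|F p| <= s / 2.
  have := lin p w pr' wr; rewrite (chart_zero Mw (Ur _ wr)) subr0.
  have -> : (p - w) *m J = 0 by rewrite pw -scalemxAl vJ0 scaler0.
  have K4 : 0 <= (4 * K)^-1 by rewrite invr_ge0 mulr_ge0 // ltW.
  rewrite subr0 => /le_trans/(_ (ler_wpM2l K4 pw_le)) Fp.
  have -> : s / 2 = 2 * K * ((4 * K)^-1 * s) by field; rewrite gt_eqF.
  by rewrite ler_wpM2l ?mulr_ge0 // ltW.
have [x [Fx xq xp]] := newton p (ltac:(lra)).
have Mx := chart_mem (Ur _ xq) Fx.
have xw : `|x - w| < dw by apply: le_lt_trans (ler_distD p x w) _; lra.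
have xab := w_eq x Mx xw.
have := row_coord_le_norm (x - p) a; have := row_coord_le_norm (x - p) b.
have [ab' ba'] : (a == b) = false /\ (b == a) = false by rewrite (negbTE ab) eq_sym (negbTE ab).
rewrite !mxE /= ab' ba' !eqxx /= wab xab.
move=> /le_trans/(_ (le_trans xp Fp)) + /le_trans/(_ (le_trans xp Fp)).
rewrite !ler_norml; lra.
Qed.

Lemma coords_eq_near_of_transversal :
  v *m J != 0 -> q ord0 a = q ord0 b ->
  (exists2 d, 0 < d & forall y, M y -> `|y - q| < d -> M (pact (tperm a b) y)) ->
  exists2 d : R, 0 < d & forall y, M y -> `|y - q| < d -> y ord0 a = y ord0 b.
Proof.
move=> vJ qab [ds ds0 swapM]; set mu := `|v *m J|.
have mu0 : 0 < mu by rewrite normr_gt0.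
have [r r0 [Ur lin]] := strict_linearization oU Uq C1F (divr_gt0 mu0 (ltr0n _ 2)).
exists (Num.min r ds) => [|y My]; first by rewrite lt_min r0 ds0.
rewrite lt_min => /andP[yr yds].
set y' := pact (tperm a b) y.
have y'q : `|y' - q| = `|y - q|.
  by rewrite -{1}(pact_tperm_fixed qab) pactB norm_pact.
have y'r : `|y' - q| < r by rewrite y'q.
have := lin y y' yr y'r.
rewrite (chart_zero My (Ur _ yr)) (chart_zero (swapM _ My yds) (Ur _ y'r)) subrr sub0r.
rewrite normrN subr_pact_tperm // -scalemxAl !normrZ -/mu => c_le.
have : `|y ord0 a - y ord0 b| * mu <= mu / 2 * `|y ord0 a - y ord0 b|.
  apply: le_trans c_le _; apply: ler_wpM2l; first by rewrite divr_ge0 // ltW.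
  by rewrite -[leRHS]mulr1 ler_wpM2l ?norm_delta_mxB_le1.
have := normr_ge0 (y ord0 a - y ord0 b) => c_ge0 c_mu.
by apply/eqP; rewrite -subr_eq0 -normr_eq0; apply/eqP; nra.
Qed.

End SymmetricChart.

Section LocallySymmetric.
Variables (R : realType) (n : nat) (M : set 'rV[R]_n).

Lemma locally_symmetric_tperm (z : 'rV[R]_n) (a b : 'I_n) :
  locally_symmetric M -> M z -> z ord0 a = z ord0 b ->
  exists2 d : R, 0 < d &
    forall y, M y -> `|y - z| < d -> M (pact (tperm a b) y).
Proof.
move=> [_ symM] Mz zab; have [d d0 symd] := symM z Mz.
have swapM := symd z (conj Mz (eball_center z d0)) _ (pact_tperm_fixed zab).
exists (d / n.+1%:R) => [|y My yz]; first by rewrite divr_gt0.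
have : (pact (tperm a b) @` (M `&` eball z d)) (pact (tperm a b) y).
  by exists y => //; split=> //; apply: eball_of_norm; rewrite -ltr_pdivlMr.
by rewrite swapM => -[].
Qed.

Lemma coord_eq_of_approx (q : 'rV[R]_n) (a b : 'I_n) :
  (forall rho, 0 < rho -> exists2 w, coords_locally_equal M a b w & `|w - q| < rho) ->
  q ord0 a = q ord0 b.
Proof.
move=> approx; apply/eqP; rewrite -subr_eq0 -normr_eq0 eq_le normr_ge0 andbT.
apply/ler_addgt0Pr => e e0; rewrite add0r.
have [w [Mw [d d0 w_eq]] wq] := approx _ (divr_gt0 e0 (ltr0n _ 2)).
have wab : w ord0 a = w ord0 b by apply: w_eq; rewrite ?subrr ?normr0.
have := row_coord_le_norm (q - w) a; have := row_coord_le_norm (q - w) b.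
rewrite !mxE distrC in wq *; rewrite -wab [`|_ - w ord0 a|]distrC => qb qa.
have := ler_distD (w ord0 a) (q ord0 a) (q ord0 b); lra.
Qed.

Lemma coords_locally_equal_closed (q : 'rV[R]_n) (a b : 'I_n) :
  locally_symmetric_C2_submanifold M -> a != b -> M q ->
  (forall rho, 0 < rho -> exists2 w, coords_locally_equal M a b w & `|w - q| < rho) ->
  coords_locally_equal M a b q.
Proof.
move=> [[dim [_ chart]] _ symM] ab Mq approx; split=> //.
have qab := coord_eq_of_approx approx.
have [U [F [oU Uq [C1F _] DF_onto M_chart]]] := chart q Mq.
apply: (coords_eq_near_of_transversal oU Uq C1F M_chart ab _ qab).
  exact: swap_direction_transversal oU Uq C1F DF_onto M_chart ab approx.
exact: locally_symmetric_tperm.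
Qed.

Lemma coords_equal_everywhere (a b : 'I_n) :
  locally_symmetric_C2_submanifold M -> a != b ->
  coords_locally_equal M a b !=set0 -> forall x, M x -> x ord0 a = x ord0 b.
Proof.
move=> symM ab ne.
set W := coords_locally_equal M a b.
set C := [set z | exists2 d : R, 0 < d &
  forall y, M y -> `|y - z| < d -> y ord0 a = y ord0 b].
have oC : open C.
  rewrite openE => z [d d0 z_eq]; apply/nbhs_ballP.
  exists (d / 2) => [|z' zz']; first by rewrite /= divr_gt0.
  exists (d / 2) => [|y My yz']; first by rewrite divr_gt0.
  apply: z_eq => //; apply: le_lt_trans (ler_distD z' y z) _.
  by move: zz'; rewrite -ball_normE /= [`|z - z'|]distrC; lra.
have W_closed : W = M `&` closure W.
  apply/seteqP; split=> z; first by move=> Wz; split; [case: Wz | exact: subset_closure].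
  move=> [Mz cz]; apply: coords_locally_equal_closed => // rho rho0.
  have [w [Ww zw]] := cz _ (nbhsx_ballx z rho rho0).
  by exists w => //; rewrite -ball_normE /= distrC in zw.
have WM : W = M.
  by have [_ connM _] := symM; apply: connM ne (ex_intro2 _ _ C oC erefl)
    (ex_intro2 _ _ _ (@closed_closure _ _) W_closed).
move=> x Mx; have [_ [d d0 x_eq]] : W x by rewrite WM.
by apply: x_eq; rewrite ?subrr ?normr0.
Qed.

End LocallySymmetric.

Lemma mem_Pvec_block (R : realType) n (y : 'rV[R]_n) (O : {set 'I_n}) (i k : 'I_n) :
  O \in Pvec y -> i \in O -> (k \in O) = (y ord0 k == y ord0 i).
Proof. by move=> /imsetP[i0 _ ->]; rewrite !inE => /eqP ->. Qed.

Theorem theorem3p28 (R : realType) (n : nat) (M : set 'rV[R]_n) (s : 'S_n) :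
  locally_symmetric_C2_submanifold M ->
  characteristic_permutation M s ->
  forall O, O \in Pperm s ->
  forall i j k : 'I_n, i \in O -> j \in O -> (i <= k <= j)%N -> k \in O.
Proof.
move=> symM [xb [Mxb [dc dc0 charM]]] O Os i j k iO jO /andP[ik kj].
have Os_xb : O \in Pvec xb by rewrite (charM xb (conj Mxb (eball_center xb dc0))).
apply/negPn/negP => kO.
have ij : i != j.
  move: kO; apply: contraNneq => eij; suff -> : k = i by [].
  by apply: val_inj; apply/eqP; rewrite eqn_leq ik andbT eij.
have ik' : i != k by move: kO; apply: contraNneq => <-.
have M_ij y : M y -> y ord0 i = y ord0 j.
  apply: coords_equal_everywhere symM ij _ y; exists xb; split=> //.
  exists (dc / n.+1%:R) => [|y' My' y'xb]; first by rewrite divr_gt0.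
  have Py' : Pvec y' = Pperm s.
    by apply: charM; split=> //; apply: eball_of_norm; rewrite -ltr_pdivlMr.
  by apply/esym/eqP; rewrite -(mem_Pvec_block j _ iO) // Py'.
have not_ik : ~ (coords_locally_equal M i k !=set0).
  move=> /(coords_equal_everywhere symM ik') /(_ xb Mxb) xb_ik.
  move/negP: kO; apply.
  by rewrite (mem_Pvec_block k Os_xb iO) xb_ik.
have [_ _ locsymM] := symM; have [[z [Mz z_ge]] _] := locsymM.
have z_kj : z ord0 k = z ord0 j.
  apply/eqP; rewrite eq_le (z_ge k j kj) andbT -(M_ij z Mz).
  exact: z_ge.
have [d d0 swapM] := locally_symmetric_tperm locsymM Mz z_kj.
have [y [My yz yik]] : exists y, [/\ M y, `|y - z| < d & y ord0 i != y ord0 k].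
  apply: contrapT => none; apply: not_ik; exists z; split=> //; exists d => // y My yz.
  by apply/eqP; apply: contrapT => yik; apply: none; exists y; split=> //; apply/negP.
move/eqP: yik; apply.
have := M_ij _ (swapM y My yz).
by rewrite pact_tpermR pact_tpermD // eq_sym.
Qed.
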